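(* Let $n\ge m\ge 0$ be integers with $n\equiv m \pmod 2$. Then $$\int_{-\infty}^{\infty} f_n(x) f_m(x)\,dx = \binom{n+m}{\frac{n+m}{2}}.$$
   Context: For $A\subseteq\mathbb{R}$, $\chi_A$ denotes the characteristic function of $A$. Define functions $f_n:\mathbb{R}\to\mathbb{R}$, $n = 0,1,2,\dots$, recursively by $f_0 = \chi_{(-1/2,1/2)}$ and $f_{n+1}(x) = f_n(x+1/2) + f_n(x-1/2)$ for all $x\in\mathbb{R}$. *)

From HB Require Import structures.
From mathcomp Require Import all_boot all_order all_algebra.
From mathcomp Require Import all_classical all_reals all_analysis.
Unset Printing Implicit Defensive.
Import Order.TTheory GRing.Theory Num.Theory.
Local Open Scope classical_set_scope.
Local Open Scope ring_scope.

Fixpoint fseq (R : realType) (n : nat) : R -> R :=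
  match n with
  | 0%N => \1_(`](- (2%:R^-1)), 2%:R^-1[%classic) : R -> R
  | k.+1 => fun x => fseq R k (x + 2%:R^-1) + fseq R k (x - 2%:R^-1)
  end.

From HB Require Import structures.
From mathcomp Require Import all_boot all_order all_algebra.
From mathcomp Require Import all_classical all_reals all_analysis.
From mathcomp Require Import measurable_realfun ring lra zify.
Import Order.TTheory GRing.Theory Num.Theory.
Local Open Scope ring_scope.

(* Unfolding the recursion, f_n is the sum of the translates of f_0 by n/2 - k
   with weights C(n, k), 0 <= k <= n.  When n = m + 2d, every translate occurring
   in f_n differs from every translate occurring in f_m by an integer, so two unit
   boxes overlap only when they coincide, i.e. for the pairs (k, j) = (j + d, j).
   Each box has integral 1, hence the integral is sum_j C(n, j + d) C(m, j), which
   is C(n + m, m + d) by Vandermonde's identity. *)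


Section BoxSplines.
Variable R : realType.
Local Notation h := (2%:R^-1 : R).
Local Notation f0 := (fseq R 0).

Lemma fseq0E (y : R) : f0 y = ((- h < y) && (y < h))%:R.
Proof. by rewrite /= indicE mem_setE in_itv. Qed.

Lemma fseq0_shiftE (x a : R) : f0 (x + a) = \1_([set` `](- h - a), (h - a)[%R]) x.
Proof. by rewrite fseq0E indicE mem_setE in_itv /= ltrBlDr ltrBrDr. Qed.

Lemma fseq0_ge0 (y : R) : 0 <= f0 y.
Proof. by rewrite fseq0E ler0n. Qed.

Lemma fseq0_mul_natshift (y : R) (i k : nat) :
  f0 (y + i%:R) * f0 (y + k%:R) = (i == k)%:R * f0 (y + k%:R).
Proof.
have [-> | neq_ik] := eqVneq i k.
  by rewrite mul1r fseq0E; case: (_ && _); rewrite ?mulr1 ?mulr0.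
rewrite mul0r !fseq0E.
have far : (i%:R + 1 <= k%:R :> R) \/ (k%:R + 1 <= i%:R :> R).
  by rewrite !natr1 !ler_nat; move/eqP: neq_ik; lia.
case: (boolP (_ && _)) => [/andP [? ?]|]; last by rewrite mul0r.
case: (boolP (_ && _)) => [/andP [? ?]|]; last by rewrite mulr0.
exfalso; case: far => ?; lra.
Qed.

Lemma fseq_binomial (n : nat) (x : R) :
  fseq R n x = \sum_(k < n.+1) 'C(n, k)%:R * f0 (x + (n%:R * h - k%:R)).
Proof.
elim: n x => [|n IH] x.
  by rewrite big_ord_recl big_ord0 bin0 mul1r addr0 !mul0r subr0 addr0.
set g := fun k : nat => f0 (x + (n.+1%:R * h - k%:R)).
have right_shift k : f0 (x + h + (n%:R * h - k%:R)) = g k.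
  by rewrite /g -natr1; congr f0; field.
have left_shift k : f0 (x - h + (n%:R * h - k%:R)) = g k.+1.
  by rewrite /g -natr1 -(natr1 k); congr f0; field.
rewrite [LHS]/= !IH.
under eq_bigr do rewrite right_shift.
under [X in _ + X]eq_bigr do rewrite left_shift.
rewrite [RHS](eq_bigr (fun k : 'I_n.+2 => 'C(n.+1, k)%:R * g k)) //.
rewrite [RHS]big_ord_recl bin0 mul1r.
rewrite [in RHS](eq_bigr (fun i : 'I_n.+1 =>
  'C(n, i.+1)%:R * g i.+1 + 'C(n, i)%:R * g i.+1)); last first.
  by move=> i _; rewrite lift0 binS natrD mulrDl.
rewrite big_split /= addrA; congr (_ + _).
by rewrite big_ord_recl big_ord_recr /= bin0 mul1r bin_small // mul0r addr0.
Qed.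

Lemma fseq0_mul_parity (m d j k : nat) (x : R) :
  f0 (x + ((m + 2 * d)%N%:R * h - k%:R)) * f0 (x + (m%:R * h - j%:R)) =
  (k == j + d)%:R * f0 (x + (m%:R * h - j%:R)).
Proof.
set y := x + m%:R * h - j%:R - k%:R.
have -> : x + ((m + 2 * d)%N%:R * h - k%:R) = y + (j + d)%:R.
  by rewrite /y !natrD; field.
have -> : x + (m%:R * h - j%:R) = y + k%:R by rewrite /y; field.
by rewrite fseq0_mul_natshift eq_sym.
Qed.

Lemma fseq_mul_parity (m d : nat) (x : R) :
  fseq R (m + 2 * d)%N x * fseq R m x =
  \sum_(j < m.+1)
    ('C(m + 2 * d, j + d) * 'C(m, j))%N%:R * f0 (x + (m%:R * h - j%:R)).
Proof.
rewrite [fseq R m x]fseq_binomial mulr_sumr; apply: eq_bigr => j _.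
rewrite fseq_binomial mulr_suml.
have jd_lt : (j + d < (m + 2 * d).+1)%N by have := ltn_ord j; lia.
rewrite (bigD1 (Ordinal jd_lt)) // big1 => [|k k_neq].
  by rewrite mulrACA fseq0_mul_parity eqxx mul1r natrM Monoid.mulm1.
rewrite mulrACA fseq0_mul_parity.
suff /negbTE -> : k != (j + d)%N :> nat by rewrite !mul0r mulr0.
by apply: contra k_neq => /eqP k_eq; apply/eqP; apply: val_inj.
Qed.

Lemma measurable_fseq0_shift (a : R) :
  measurable_fun [set: R] (fun x : R => f0 (x + a)).
Proof.
rewrite (_ : (fun x => _) = \1_([set` `](- h - a), (h - a)[%R])).
  exact: measurable_indic.
by apply/funext => x; rewrite fseq0_shiftE.
Qed.

Lemma integral_fseq0_shift (a : R) :
  (\int[@lebesgue_measure R]_x (f0 (x + a))%:E = 1)%E.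
Proof.
under eq_integral do rewrite fseq0_shiftE.
rewrite integral_indic //= setIT lebesgue_measure_itv /= lte_fin ifT; last lra.
by rewrite -EFinD; congr (_%:E); field.
Qed.

Lemma integral_sum_fseq0_shift (I : finType) (c : I -> nat) (a : I -> R) :
  (\int[@lebesgue_measure R]_x (\sum_i (c i)%:R * f0 (x + a i))%:E)%E
  = (\sum_i c i)%:R%:E.
Proof.
have measurable_term i :
    measurable_fun [set: R] (fun x : R => (c i)%:R * f0 (x + a i)).
  by apply: measurable_funM; [exact: measurable_cst | exact: measurable_fseq0_shift].
under eq_integral do rewrite -sumEFin.
rewrite ge0_integral_sum //; last 2 first.
- by move=> i; apply/measurable_EFinP; exact: measurable_term.
- by move=> i x _; rewrite lee_fin mulr_ge0 ?fseq0_ge0.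
rewrite natr_sum -sumEFin; apply: eq_bigr => i _.
under eq_integral do rewrite EFinM.
rewrite ge0_integralZl_EFin ?integral_fseq0_shift ?mule1 //.
- by move=> x _; rewrite lee_fin fseq0_ge0.
- by apply/measurable_EFinP; exact: measurable_fseq0_shift.
Qed.

End BoxSplines.

Lemma Vandermonde_shift (n m d : nat) :
  (\sum_(j < m.+1) 'C(n, j + d) * 'C(m, j) = 'C(m + n, m + d))%N.
Proof.
pose F j := ('C(m, j) * 'C(n, m + d - j))%N.
rewrite -binomial.Vandermonde (reindex_inj rev_ord_inj) /=.
rewrite (eq_bigr (fun j : 'I_m.+1 => F j)) => [|j _]; last first.
  have j_le_m : (j <= m)%N by rewrite -ltnS.
  by rewrite /F subSS bin_sub // mulnC addnC addnBA // addnC.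
rewrite (big_ord_widen (m + d).+1 F) ?ltnS ?leq_addr // big_mkcond /=.
apply: eq_bigr => j _; case: ifP => // /negbT j_gt_m.
by rewrite /F bin_small ?mul0n //; lia.
Qed.

Theorem mainTheorem5 (R : realType) (n m : nat) :
  (m <= n)%N -> n = m %[mod 2] ->
  (\int[@lebesgue_measure R]_x ((fseq R n x * fseq R m x)%:E))%E
    = ('C(n + m, (n + m) %/ 2))%:R%:E.
Proof.
move=> le_mn parity.
have [d ->] : exists d, n = (m + 2 * d)%N by exists ((n - m) %/ 2)%N; lia.
under eq_integral do rewrite fseq_mul_parity.
rewrite integral_sum_fseq0_shift Vandermonde_shift.
by congr (_%:R%:E); congr 'C(_, _); lia.
Qed.
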